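(* If $\mathfrak{g}\in Q(\varphi)\setminus \downarrow{\mathfrak Z}$, then $\varnothing \neq P(\varphi_\mathfrak{g})\subseteq \Gamma_\mathfrak{g}\setminus \downarrow{\mathfrak Z}_\mathfrak{g}\subseteq Q(\varphi_\mathfrak{g})$, and ${\rm Eigen}(\sigma_{\varphi\restriction_{\frac{\mathfrak{g}}{\sim}},\mathfrak{w}^{\frac{\mathfrak{g}}{\sim}}},V^{\frac{\mathfrak{g}}{\sim}})\setminus\{0\}=\{r\in F\setminus\{0\}: \mathfrak{w}_\theta\cdots\mathfrak{w}_{\varphi^{per(\theta)-1}(\theta)}=r^{per(\theta)}\}$ for all $\theta\in P(\varphi_\mathfrak{g})$.
   Context: $V$ is a vector space over a field $F$, $\Gamma$ a nonempty set, $\varphi:\Gamma\to\Gamma$ a self-map, and $\mathfrak{w}=(\mathfrak{w}_\alpha)_{\alpha\in\Gamma}\in F^\Gamma$. The weighted generalized shift is $\sigma_{\varphi,\mathfrak{w}}:V^\Gamma\to V^\Gamma$, $(x_\alpha)_{\alpha\in\Gamma}\mapsto(\mathfrak{w}_\alpha x_{\varphi(\alpha)})_{\alpha\in\Gamma}$. For nonempty $D\subseteq\Gamma$, $\mathfrak{w}^D:=(\mathfrak{w}_\alpha)_{\alpha\in D}$. $\mathfrak{Z}:=\{\alpha\in\Gamma:\mathfrak{w}_\alpha=0\}$ and $\downarrow\mathfrak{Z}:=\bigcup_{n\geq0}\varphi^{-n}(\mathfrak{Z})$. The relation $\sim$ on $\Gamma$ is defined by $\alpha\sim\beta$ iff there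 exist $n,m\geq1$ with $\varphi^n(\alpha)=\varphi^m(\beta)$; it is an equivalence relation with classes $\frac{\alpha}{\sim}$. For $\mathfrak{g}\in\Gamma$: $\Gamma_\mathfrak{g}:=\frac{\mathfrak{g}}{\sim}$, $\varphi_\mathfrak{g}:=\varphi\restriction_{\Gamma_\mathfrak{g}}:\Gamma_\mathfrak{g}\to\Gamma_\mathfrak{g}$, $\downarrow\mathfrak{Z}_\mathfrak{g}:=\downarrow\mathfrak{Z}\cap\Gamma_\mathfrak{g}$. A point $a$ is wandering if $\{f^n(a)\}_{n\geq1}$ is one-to-one, quasi-periodic if $f^n(a)=f^m(a)$ for some $n>m\geq1$, periodic if $f^n(a)=a$ for some $n\geq1$; $W(f),Q(f),P(f)$ denote the sets of wandering, quasi-periodic, periodic points of a self-map $f$, and $per(\alpha)=\min\{n\geq1:f^n(\alpha)=\alpha\}$ for $\alpha\in P(f)$. For a linear map $T:W\to W$, ${\rm Eigen}(T,W)$ is the set of all $r\in F$ such that $T(x)=rx$ for some nonzero $x\in W$. *)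

From mathcomp Require Import all_boot all_algebra.
From mathcomp Require Import boolp.
Set Implicit Arguments. Unset Strict Implicit. Unset Printing Implicit Defensive.
Import GRing.Theory.
Local Open Scope ring_scope.

Section Dyn.
Variables (T : Type) (f : T -> T).

Definition wandering (a : T) : Prop :=
  forall n m : nat, (0 < n)%N -> (0 < m)%N -> iter n f a = iter m f a -> n = m.
Definition quasi_periodic (a : T) : Prop :=
  exists n m : nat, [/\ (0 < m)%N, (m < n)%N & iter n f a = iter m f a].
Definition periodic (a : T) : Prop :=
  exists n : nat, (0 < n)%N /\ iter n f a = a.

(* per(a) = min {n >= 1 : f^n(a) = a}  (0 by convention if a is not periodic) *)
Definition per (a : T) : nat :=
  match pselect (periodic a) with
  | left H =>
      @ex_minn (fun n => (0 < n)%N && `[< iter n f a = a >])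
        (let: ex_intro n (conj Hn Ha) := H in
         ex_intro _ n (introT andP (conj Hn (asboolT Ha))))
  | right _ => 0%N
  end.

Definition sim (a b : T) : Prop :=
  exists n m : nat, [/\ (0 < n)%N, (0 < m)%N & iter n f a = iter m f b].

Lemma sim_step (g a : T) : sim a g -> sim (f a) g.
Proof.
case=> n [m [n0 m0 E]]; exists n, m.+1; split => //.
by rewrite -iterSr iterS E -iterS.
Qed.

Definition sim_class (g : T) : Type := {a : T | sim a g}.

Definition restr_map (g : T) (a : sim_class g) : sim_class g :=
  exist _ (f (proj1_sig a)) (sim_step (proj2_sig a)).

End Dyn.

Section Shift.
Variables (F : fieldType) (V : lmodType F).

(* downZ phi w a  <->  a \in \downarrow Z = \bigcup_n phi^{-n}(Z), Z = {w = 0} *)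
Definition downZ (G : Type) (phi : G -> G) (w : G -> F) (a : G) : Prop :=
  exists n : nat, w (iter n phi a) = 0.

Definition wshift (G : Type) (phi : G -> G) (w : G -> F) (x : G -> V) : G -> V :=
  fun a => w a *: x (phi a).

Definition Eigen (G : Type) (T : (G -> V) -> (G -> V)) (r : F) : Prop :=
  exists x : G -> V, (exists a, x a != 0) /\ (forall a, T x a = r *: x a).

End Shift.

From mathcomp Require Import all_boot all_algebra boolp.
From mathcomp Require Import ring.
Set Implicit Arguments. Unset Strict Implicit. Unset Printing Implicit Defensive.
Import GRing.Theory.
Local Open Scope ring_scope.

(* Every point of the class of g is carried into the cycle C that the orbit of
   g eventually enters; a periodic point of the class lies on C, so a zero
   weight on its orbit would be a zero weight on the orbit of g.  An
   eigenvector x for r != 0 satisfies r^k x_a = w_a ... w_(phi^(k-1) a) x_(phi^k a),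
   so its support is carried into C, and going once around C from theta gives
   w_theta ... w_(phi^(p-1) theta) = r^p.  Conversely, when this holds,
   x_(phi^i theta) := r^i (w_theta ... w_(phi^(i-1) theta))^-1 v is well defined
   on C, and x_a := r^-N w_a ... w_(phi^(N-1) a) x_(phi^N a), for any N with
   phi^N a in C, is an eigenvector. *)

Section Orbits.
Variables (T : Type) (f : T -> T).

Lemma iter_mul_fix q k a : iter q f a = a -> iter (k * q) f a = a.
Proof. by move=> fqa; rewrite iterM; apply: iter_fix. Qed.

Lemma periodic_iter n a : periodic f a -> periodic f (iter n f a).
Proof. by case=> q [q_gt0 fqa]; exists q; split; rewrite // -iterD addnC iterD fqa. Qed.

Lemma periodic_return n a : periodic f a -> exists k, iter k f (iter n f a) = a.
Proof.
case=> q [q_gt0 fqa]; exists (n * q - n)%N.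
by rewrite -iterD subnK ?leq_pmulr // iter_mul_fix.
Qed.

Lemma quasi_periodicP a :
  quasi_periodic f a <-> exists2 m, (0 < m)%N & periodic f (iter m f a).
Proof.
split=> [[n [m [m_gt0 lt_mn fnm]]] | [m m_gt0 [q [q_gt0 fq]]]].
  exists m => //; exists (n - m)%N; split; first by rewrite subn_gt0.
  by rewrite -iterD subnK 1?ltnW.
by exists (q + m)%N, m; split; rewrite ?iterD ?fq // -{1}(add0n m) ltn_add2r.
Qed.

Lemma sim_meet a b c : sim f a c -> sim f b c ->
  exists N i, iter N f a = iter i f b.
Proof.
case=> n [m [_ _ fnm]] [n' [m' [_ _ fnm']]].
by exists (m' + n)%N, (m + n')%N; rewrite !iterD fnm -!iterD addnC iterD -fnm' -iterD.
Qed.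

Lemma quasi_periodic_sim a b : quasi_periodic f b -> sim f a b -> quasi_periodic f a.
Proof.
move=> /quasi_periodicP[k k_gt0 pk] [n [m [n_gt0 _ fnm]]].
apply/quasi_periodicP; exists (k + n)%N; first by rewrite addn_gt0 k_gt0.
by rewrite iterD fnm -iterD addnC iterD; apply: periodic_iter.
Qed.

Lemma sim_iter n a : sim f (iter n f a) a.
Proof. by exists 1%N, n.+1. Qed.

End Orbits.

Section Period.
Variables (T : Type) (f : T -> T) (t : T).
Hypothesis t_periodic : periodic f t.

Let perP : [/\ (0 < per f t)%N, iter (per f t) f t = t &
  forall n, (0 < n)%N -> iter n f t = t -> (per f t <= n)%N].
Proof.
rewrite /per; case: pselect => // ?.
case: ex_minnP => p /andP[p_gt0 /asboolP fp] p_min; split=> // n n_gt0 fn.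
by apply: p_min; rewrite n_gt0; apply/asboolP.
Qed.

Lemma per_gt0 : (0 < per f t)%N. Proof. by case: perP => ->. Qed.

Lemma iter_per : iter (per f t) f t = t. Proof. by case: perP => _ ->. Qed.

Lemma per_min n : (0 < n)%N -> iter n f t = t -> (per f t <= n)%N.
Proof. by case: perP => _ _; apply. Qed.

Lemma iter_modper c : iter (c %% per f t) f t = iter c f t.
Proof. by rewrite {2}(divn_eq c (per f t)) addnC iterD iter_mul_fix ?iter_per. Qed.

Lemma iter_per_inj c c' : (c < per f t)%N -> (c' < per f t)%N ->
  iter c f t = iter c' f t -> c = c'.
Proof.
wlog lt_cc' : c c' / (c < c')%N.
  move=> W lt_c lt_c' fcc'; case: (ltngtP c c') => [lt|lt|//].
    exact: W.
  exact/esym/W.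
move=> _ lt_c' fcc'; have le_c'p := ltnW lt_c'.
have: (per f t <= per f t - c' + c)%N.
  apply: per_min; first by rewrite addn_gt0 subn_gt0 lt_c'.
  by rewrite iterD fcc' -iterD subnK ?iter_per.
by rewrite leqNgt -{2}(subnK le_c'p) ltn_add2l lt_cc'.
Qed.

Lemma eq_iter_per c c' : iter c f t = iter c' f t -> c = c' %[mod per f t].
Proof.
rewrite -iter_modper -(iter_modper c') => /iter_per_inj; apply; exact: ltn_pmod per_gt0.
Qed.

End Period.

Section Weights.
Variables (F : fieldType) (S : Type) (f : S -> S) (w : S -> F).

Definition wprod a n := \prod_(j < n) w (iter j f a).

Lemma wprod0 a : wprod a 0 = 1. Proof. exact: big_ord0. Qed.

Lemma wprodS a n : wprod a n.+1 = wprod a n * w (iter n f a).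
Proof. exact: big_ord_recr. Qed.

Lemma wprodSl a n : wprod a n.+1 = w a * wprod (f a) n.
Proof.
by rewrite /wprod big_ord_recl; congr (_ * _); apply: eq_bigr => j _; rewrite -iterSr.
Qed.

Lemma wprodD a n m : wprod a (n + m) = wprod a n * wprod (iter n f a) m.
Proof.
elim: m => [|m IH]; first by rewrite addn0 wprod0 mulr1.
by rewrite addnS !wprodS IH -iterD addnC mulrA.
Qed.

Lemma downZ_iter n a : downZ f w (iter n f a) -> downZ f w a.
Proof. by case=> k wk; exists (k + n)%N; rewrite iterD. Qed.

Lemma weight_neq0 a k : ~ downZ f w a -> w (iter k f a) != 0.
Proof. by move=> aZ; apply/eqP => wk; apply: aZ; exists k. Qed.

Lemma wprod_neq0 a n : ~ downZ f w a -> wprod a n != 0.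
Proof. by move=> aZ; apply/prodf_neq0 => j _; apply: weight_neq0. Qed.

Lemma sim_periodic_downZ a b : periodic f a -> sim f a b -> downZ f w a -> downZ f w b.
Proof.
move=> a_per [n [k [_ _ fnk]]] aZ; have [j fj] := periodic_return n a_per.
by apply: (downZ_iter (n := j + k)); rewrite iterD -fnk fj.
Qed.

Variables (V : lmodType F) (r : F) (x : S -> V).
Hypothesis x_eigen : forall a, wshift f w x a = r *: x a.

Lemma eigenvector_iter a k : r ^+ k *: x a = wprod a k *: x (iter k f a).
Proof.
elim: k => [|k IH]; first by rewrite expr0 wprod0 !scale1r.
by rewrite exprSr mulrC -scalerA IH scalerA mulrC -scalerA -x_eigen /wshift scalerA -wprodS.
Qed.

Lemma eigenvector_iter_neq0 a k : r != 0 -> x a != 0 -> x (iter k f a) != 0.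
Proof.
move=> r_neq0; apply: contra_neq => xk.
by apply: (scalerI (expf_neq0 k r_neq0)); rewrite eigenvector_iter xk !scaler0.
Qed.

End Weights.

Section CycleEigen.
Variables (F : fieldType) (V : lmodType F) (S : Type) (f : S -> S) (w : S -> F).
Variables (t : S) (r : F).
Hypothesis t_periodic : periodic f t.
Hypothesis reach_t : forall a, exists N i, iter N f a = iter i f t.
Hypothesis t_nZ : ~ downZ f w t.

Local Notation p := (per f t).

Lemma eigen_wprod_per : Eigen (wshift (V:=V) f w) r -> r != 0 -> wprod f w t p = r ^+ p.
Proof.
case=> x [[a xa] x_eigen] r_neq0.
have [N [i fNi]] := reach_t a.
have [k fk] := periodic_return i t_periodic.
have xt : x t != 0 by rewrite -fk -fNi -iterD (eigenvector_iter_neq0 x_eigen).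
have: (wprod f w t p - r ^+ p) *: x t = 0.
  by rewrite scalerBl (eigenvector_iter x_eigen) iter_per // subrr.
by move/eqP; rewrite scaler_eq0 (negbTE xt) orbF subr_eq0 => /eqP.
Qed.

Section EigenvectorConstruction.
Hypothesis r_neq0 : r != 0.
Hypothesis wprod_per : wprod f w t p = r ^+ p.

Definition cycle_coef i := r ^+ i / wprod f w t i.

Lemma cycle_coef_addper i : cycle_coef (p + i) = cycle_coef i.
Proof.
rewrite /cycle_coef wprodD iter_per // wprod_per exprD invfM mulrACA.
by rewrite divff ?mul1r // expf_neq0.
Qed.

Lemma cycle_coef_modper i : cycle_coef (i %% p) = cycle_coef i.
Proof.
rewrite {2}(divn_eq i p) addnC; elim: (i %/ p)%N => [|k IH].
  by rewrite mul0n addn0.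
by rewrite mulSn addnCA cycle_coef_addper.
Qed.

Lemma eq_cycle_coef i j : iter i f t = iter j f t -> cycle_coef i = cycle_coef j.
Proof.
by move/(eq_iter_per t_periodic) => ij; rewrite -cycle_coef_modper ij cycle_coef_modper.
Qed.

Definition orbit_coef a N i := wprod f w a N / r ^+ N * cycle_coef i.

Lemma orbit_coefS a N i : iter N f a = iter i f t ->
  orbit_coef a N.+1 i.+1 = orbit_coef a N i.
Proof.
move=> fNi; rewrite /orbit_coef /cycle_coef !wprodS fNi !exprS.
have := weight_neq0 i t_nZ; have := wprod_neq0 i t_nZ.
move: (w _) (wprod _ _ _ _) => u W u_neq0 W_neq0.
by field; rewrite u_neq0 W_neq0 expf_neq0.
Qed.

Lemma orbit_coef_indep a N i N' i' :
  iter N f a = iter i f t -> iter N' f a = iter i' f t ->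
  orbit_coef a N i = orbit_coef a N' i'.
Proof.
wlog le_NN' : N i N' i' / (N <= N')%N.
  by move=> W fNi fNi'; case: (leqP N N') => [|/ltnW] le; [exact: W | apply/esym/W].
move=> fNi fNi'.
have fiK K : iter (N + K) f a = iter (i + K) f t by rewrite addnC iterD fNi -iterD addnC.
have shift K : orbit_coef a (N + K) (i + K) = orbit_coef a N i.
  elim: K => [|K IH]; first by rewrite !addn0.
  by rewrite !addnS orbit_coefS.
rewrite -(shift (N' - N)%N) /orbit_coef subnKC //.
by rewrite (@eq_cycle_coef _ i') // -fiK subnKC.
Qed.

Lemma wprod_per_eigen : (exists v : V, v != 0) -> Eigen (wshift (V:=V) f w) r.
Proof.
case=> v v_neq0.
have reach_pair a : exists Ni : nat * nat, iter Ni.1 f a = iter Ni.2 f t.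
  by have [N [i fNi]] := reach_t a; exists (N, i).
pose ch a := proj1_sig (cid (reach_pair a)).
have chP a : iter (ch a).1 f a = iter (ch a).2 f t := proj2_sig (cid (reach_pair a)).
exists (fun a => orbit_coef a (ch a).1 (ch a).2 *: v); split.
  exists t; rewrite (@orbit_coef_indep t _ _ 0 0 (chP t)) //.
  by rewrite /orbit_coef /cycle_coef wprod0 expr0 !divr1 mulr1 scale1r.
move=> a; rewrite /wshift !scalerA; congr (_ *: v).
have fch : iter (ch (f a)).1.+1 f a = iter (ch (f a)).2 f t by rewrite iterSr chP.
rewrite (@orbit_coef_indep a _ _ _ _ (chP a) fch) /orbit_coef wprodSl exprS.
by field; rewrite r_neq0 expf_neq0.
Qed.

End EigenvectorConstruction.

Lemma eigen_wshiftP : (exists v : V, v != 0) ->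
  (Eigen (wshift (V:=V) f w) r /\ r != 0) <-> (r != 0 /\ wprod f w t p = r ^+ p).
Proof.
move=> V_nontriv; split=> [[eig r_neq0] | [r_neq0 wprod_per]].
  by split=> //; exact: eigen_wprod_per.
by split=> //; exact: wprod_per_eigen.
Qed.

End CycleEigen.

Section SimClass.
Variables (T : Type) (phi : T -> T) (g : T).
Local Notation restr := (@restr_map T phi g).

Lemma val_iter_restr n a : proj1_sig (iter n restr a) = iter n phi (proj1_sig a).
Proof. by elim: n => //= n ->. Qed.

Lemma iter_restrE n m a b :
  iter n restr a = iter m restr b <-> iter n phi (proj1_sig a) = iter m phi (proj1_sig b).
Proof.
rewrite -!val_iter_restr; split=> [-> // | ].
by case: (iter n restr a) (iter m restr b) => [x ?] [y ?] /= xy; apply: eq_exist.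
Qed.

Lemma periodic_restrE a : periodic restr a <-> periodic phi (proj1_sig a).
Proof. by split=> -[q [q_gt0 fq]]; exists q; split=> //; apply/(iter_restrE q 0). Qed.

Lemma quasi_periodic_restrE a :
  quasi_periodic restr a <-> quasi_periodic phi (proj1_sig a).
Proof. by split=> -[n [m [m_gt0 lt_mn fnm]]]; exists n, m; split=> //; apply/iter_restrE. Qed.

Lemma reach_restr a b : exists N i, iter N restr a = iter i restr b.
Proof.
have [N [i fNi]] := sim_meet (proj2_sig a) (proj2_sig b).
by exists N, i; apply/iter_restrE.
Qed.

Lemma downZ_restrE (F : fieldType) (w : T -> F) a :
  downZ restr (fun b => w (proj1_sig b)) a <-> downZ phi w (proj1_sig a).
Proof. by split=> -[k wk]; exists k; rewrite ?val_iter_restr // in wk *. Qed.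

End SimClass.

Theorem corollary2p8 (F : fieldType) (V : lmodType F) (Gamma : Type)
  (phi : Gamma -> Gamma) (w : Gamma -> F) (g : Gamma) :
  (exists v : V, v != 0) ->
  quasi_periodic phi g -> ~ downZ phi w g ->
  [/\ (exists t : sim_class phi g, periodic (restr_map (g:=g)) t),
      (forall a : sim_class phi g, periodic (restr_map (g:=g)) a ->
          ~ downZ phi w (proj1_sig a)),
      (forall a : sim_class phi g, ~ downZ phi w (proj1_sig a) ->
          quasi_periodic (restr_map (g:=g)) a) &
      (forall t : sim_class phi g, periodic (restr_map (g:=g)) t ->
        forall r : F,
          (Eigen (wshift (V:=V) (restr_map (g:=g))
                    (fun a : sim_class phi g => w (proj1_sig a))) r /\ r != 0)
          <->
          (r != 0 /\
           \prod_(i < per (restr_map (g:=g)) t)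
              w (proj1_sig (iter i (restr_map (g:=g)) t))
           = r ^+ per (restr_map (g:=g)) t))].
Proof.
move=> V_nontriv g_qp g_nZ.
have periodic_nZ (a : sim_class phi g) : periodic (restr_map (g:=g)) a ->
    ~ downZ phi w (proj1_sig a).
  by move=> /periodic_restrE a_per aZ; apply/g_nZ/(sim_periodic_downZ a_per (proj2_sig a)).
split=> // [| a _ | t t_per r].
- have [m _ m_per] := (quasi_periodicP phi g).1 g_qp.
  by exists (exist (sim phi ^~ g) _ (sim_iter phi m g)); apply/periodic_restrE.
- exact/quasi_periodic_restrE/(quasi_periodic_sim g_qp (proj2_sig a)).
- apply: (eigen_wshiftP r t_per _ _ V_nontriv) => [a | /downZ_restrE].
    exact: reach_restr.
  exact: periodic_nZ.
Qed.
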